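(* Let $F$ be a graph with at least two vertices, let $r\ge 3$, let $\mathcal H$ be a Berge-$F$-free $r$-uniform hypergraph, and let $p=|E(F)|$. Define $\mathcal H_1,\mathcal H_2,\mathcal H_3,G_1,G_2,G_3$ as in the context (for an arbitrary choice of the triangles $T_h$). Then: (i) $G_2$ contains no copy of $F$; (ii) with $k=\min\{r-1,|V(F)|-1\}$, $$|E(\mathcal H)|\le (|E(F)|-1)\,\mathcal N(K_3,G_1)+\mathcal N(K_r,G_2)+\frac{|E(G_3)|}{k(r-k)}.$$
   Context: The shadow graph of $\mathcal H$ is the graph on $V(\mathcal H)$ where $xy$ is an edge iff some hyperedge contains $\{x,y\}$. An edge $xy$ of the shadow graph is $q$-heavy if at least $q$ hyperedges of $\mathcal H$ contain $\{x,y\}$, and $q$-light otherwise; ''heavy''/''light'' mean $2$-heavy/$2$-light. For a hyperedge $h$, its subedges are the pairs inside $h$. $\mathcal H_1$ is the set of hyperedges $h$ containing three vertices forming a triangle $T$ (all pairs inside $h$) such that at least two edges of $T$ are heavy and at least one edge of $T$ is $p$-light; for each $h\in\mathcal H_1$ fix one such triangle $T_h$, and let $G_1$ be the graph formed by the edges of all chosen triangles $T_h$. $\mathcal H_2$ is the set of hyperedges all of whose subedges are $p$-heavy, and $G_2$ is the shadow graph of $\mathcal H_2$. $\mathcal H_3$ consists of all remaining hyperedges, and $G_3$ is the graph formed by the light edges contained in hyperedges of $\mathcal H_3$. $\mathcal N(H,G)$ denotes the number of copies of $H$ in $G$. Berge-$F$: injections $\varphi:V(F)\to V(\mathcal H)$,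 $f:E(F)\to E(\mathcal H)$ with $\{\varphi(x),\varphi(y)\}\subseteq f(xy)$ for each $xy\in E(F)$. *)

From mathcomp Require Import all_boot all_order all_algebra.
Set Implicit Arguments. Unset Strict Implicit. Unset Printing Implicit Defensive.

(* Graphs (on a finType) are represented by their edge sets: sets of 2-subsets.
   Hypergraphs are sets of hyperedges (subsets of the vertex type). *)
Section Defs.
Variable V : finType.

Definition codeg (H : {set {set V}}) (e : {set V}) : nat :=
  #|[set h in H | e \subset h]|.

Definition heavy (q : nat) (H : {set {set V}}) (e : {set V}) : bool :=
  q <= codeg H e.

Definition subedges (h : {set V}) : {set {set V}} :=
  [set e : {set V} | (e \subset h) && (#|e| == 2)].

Definition shadow (H : {set {set V}}) : {set {set V}} :=
  [set e : {set V} | (#|e| == 2) && [exists h in H, e \subset h]].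

Definition good_triangle (H : {set {set V}}) (p : nat) (h T : {set V}) : bool :=
  [&& T \subset h, #|T| == 3,
      2 <= #|[set e in subedges T | heavy 2 H e]|
    & [exists e in subedges T, ~~ heavy p H e]].

Definition H1 (H : {set {set V}}) (p : nat) : {set {set V}} :=
  [set h in H | [exists T, good_triangle H p h T]].

(* G1 for a choice function Tch : h |-> T_h *)
Definition G1 (H : {set {set V}}) (p : nat) (Tch : {set V} -> {set V})
  : {set {set V}} :=
  \bigcup_(h in H1 H p) subedges (Tch h).

Definition H2 (H : {set {set V}}) (p : nat) : {set {set V}} :=
  [set h in H | [forall e in subedges h, heavy p H e]].

Definition G2 (H : {set {set V}}) (p : nat) : {set {set V}} :=
  shadow (H2 H p).

Definition H3 (H : {set {set V}}) (p : nat) : {set {set V}} :=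
  H :\: (H1 H p :|: H2 H p).

Definition G3 (H : {set {set V}}) (p : nat) : {set {set V}} :=
  [set e in \bigcup_(h in H3 H p) subedges h | ~~ heavy 2 H e].

Definition ncliques (k : nat) (G : {set {set V}}) : nat :=
  #|[set S : {set V} | (#|S| == k) && (subedges S \subset G)]|.

End Defs.

(* F is a graph on U with edge set EF (a set of 2-subsets of U). *)
Definition is_graph (U : finType) (EF : {set {set U}}) : Prop :=
  forall e, e \in EF -> #|e| = 2.

Definition has_BergeF (U V : finType) (EF : {set {set U}}) (H : {set {set V}})
  : Prop :=
  exists (phi : U -> V) (f : {set U} -> {set V}),
    [/\ injective phi, {in EF &, injective f}
      & forall e, e \in EF -> f e \in H /\ phi @: e \subset f e].

Definition contains_copy (U V : finType) (EF : {set {set U}}) (G : {set {set V}})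
  : Prop :=
  exists phi : U -> V, injective phi /\ forall e, e \in EF -> phi @: e \in G.

From mathcomp Require Import all_boot all_order all_algebra.
From mathcomp Require Import zify.
Import Order.TTheory GRing.Theory Num.Theory.
Set Implicit Arguments. Unset Strict Implicit. Unset Printing Implicit Defensive.

(* Edges of G2 are p-heavy, so a copy of F in G2 extends greedily to a Berge-F.  A hyperedge of H1 is charged to its
   triangle T_h, which contains a p-light edge and is therefore chosen by fewer
   than p hyperedges; a hyperedge of H2 is an r-clique of G2.  Inside a
   hyperedge h of H3 heaviness is transitive (otherwise h would be in H1), so
   the heavy pairs of h form disjoint cliques.  A clique with at least three
   vertices has only p-heavy edges, so it has fewer than |V(F)| vertices and is
   not all of h (h has a p-light pair).  Such a partition of the r vertices of h
   leaves at least k(r-k) light pairs, and a light pair lies in one hyperedge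
   only. *)

Section SetCombinatorics.
Variable T : finType.

Lemma set2_in_subedges (S : {set T}) a b :
  a \in S -> b \in S -> a != b -> [set a; b] \in subedges S.
Proof.
move=> aS bS ab; rewrite inE cards2 ab andbT.
by apply/subsetP=> x; rewrite !inE => /orP[]/eqP->.
Qed.

Lemma set2_inj_cut (A : {set T}) x y x' y' :
  x \in A -> y \notin A -> x' \in A -> y' \notin A ->
  [set x; y] = [set x'; y'] -> (x, y) = (x', y').
Proof.
move=> xA yA x'A y'A E.
have : x \in [set x'; y'] by rewrite -E !inE eqxx.
rewrite !inE => /orP[/eqP xx'|/eqP xy']; last by move: xA; rewrite xy' (negbTE y'A).
have : y \in [set x'; y'] by rewrite -E !inE eqxx orbT.
rewrite !inE => /orP[/eqP yx'|/eqP ->]; last by rewrite xx'.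
by move: yA; rewrite yx' x'A.
Qed.

Lemma double_count (T' : finType) (A : {set T}) (B : {set T'}) (R : T -> T' -> bool) :
  \sum_(x in A) #|[set y in B | R x y]| = \sum_(y in B) #|[set x in A | R x y]|.
Proof.
have card_sep (I : finType) (C : {set I}) (P : pred I) :
    #|[set i in C | P i]| = \sum_(i in C) P i.
  rewrite -sum1_card big_mkcond [RHS]big_mkcond /=.
  by apply: eq_bigr => i _; rewrite inE; case: (i \in C); case: (P i).
under eq_bigr => x _ do rewrite (card_sep _ _ (R x)).
under [RHS]eq_bigr => y _ do rewrite (card_sep _ _ (R^~ y)).
exact: exchange_big.
Qed.

Lemma greedy_sdr (T' : finType) (y0 : T') (S : T -> {set T'}) (A : {set T}) :
  (forall e, e \in A -> #|A| <= #|S e|) ->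
  exists2 f : T -> T', {in A &, injective f} & forall e, e \in A -> f e \in S e.
Proof.
move: {2}#|A| (erefl #|A|) => n; elim: n A => [|n IH] A cardA bigS.
  have -> : A = set0 by apply/eqP; rewrite -cards_eq0 cardA.
  by exists (fun _ => y0) => [x y|e]; rewrite inE.
have [e0 e0A] : exists e0, e0 \in A by apply/card_gt0P; rewrite cardA.
have cardA' : #|A :\ e0| = n by move: cardA; rewrite (cardsD1 e0) e0A => -[].
have [f f_inj fS] : exists2 f : T -> T', {in A :\ e0 &, injective f} &
    forall e, e \in A :\ e0 -> f e \in S e.
  apply: (IH _ cardA') => e /setD1P[_ eA]; rewrite cardA'.
  by apply: leq_trans (leqnSn n) _; rewrite -cardA bigS.
have [y] : exists y, y \in S e0 :\: f @: (A :\ e0).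
  apply/card_gt0P; rewrite cardsD.
  have := bigS e0 e0A; have := leq_imset_card f (A :\ e0).
  have := subset_leq_card (subsetIr (S e0) (f @: (A :\ e0))); lia.
rewrite inE => /andP[y_new yS].
have f_out e : e \in A :\ e0 -> y != f e.
  by move=> eA'; apply: contraNneq y_new => ->; apply: imset_f.
exists (fun e => if e == e0 then y else f e) => [a b aA bA|e eA] /=.
  case: (eqVneq a e0) => [->|ae0]; case: (eqVneq b e0) => [->|be0] //.
  - by move/eqP; rewrite (negbTE (f_out b _)) // !inE be0.
  - by move/esym/eqP; rewrite (negbTE (f_out a _)) // !inE ae0.
  - by apply: f_inj; rewrite !inE ?ae0 ?be0.
by case: (eqVneq e e0) => [->|ee0] //; apply: fS; rewrite !inE ee0.
Qed.

End SetCombinatorics.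

Lemma ncliques_set0 (V : finType) k : 1 < k -> ncliques k (set0 : {set {set V}}) = 0.
Proof.
move=> k_gt1; apply/eqP; rewrite cards_eq0; apply/eqP/setP=> S; rewrite !inE.
apply/negP=> /andP[/eqP cardS sub0].
have /card_gt1P[x [y [xS yS xy]]] : 1 < #|S| by rewrite cardS.
by have := subsetP sub0 _ (set2_in_subedges xS yS xy); rewrite inE.
Qed.

Lemma bergeF_of_heavy_embedding (U V : finType) (EF : {set {set U}})
    (H : {set {set V}}) (phi : U -> V) :
  injective phi -> (forall e, e \in EF -> heavy #|EF| H (phi @: e)) ->
  has_BergeF EF H.
Proof.
move=> phi_inj heavy_phi.
have [f f_inj fH] :=
  greedy_sdr set0 (S := fun e : {set U} => [set h in H | phi @: e \subset h]) heavy_phi.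
by exists phi, f; split=> // e /fH; rewrite inE => /andP[].
Qed.

Lemma bergeF_of_heavy_clique (U V : finType) (EF : {set {set U}})
    (H : {set {set V}}) (C : {set V}) :
  is_graph EF -> #|U| <= #|C| ->
  {in C &, forall x y, x != y -> heavy #|EF| H [set x; y]} -> has_BergeF EF H.
Proof.
move=> graphF UC heavyC.
pose phi (u : U) := enum_val (widen_ord UC (enum_rank u)).
have phi_inj : injective phi.
  by move=> u v /enum_val_inj [] /ord_inj /enum_rank_inj.
apply: (bergeF_of_heavy_embedding phi_inj) => e eEF.
have /cards2P[x [y [xy e_xy]]] : #|phi @: e| == 2 by rewrite card_imset // graphF.
have inC w : w \in phi @: e -> w \in C by case/imsetP=> u _ ->; apply: enum_valP.
by rewrite e_xy; apply: heavyC => //; apply: inC; rewrite e_xy !inE eqxx ?orbT.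
Qed.

Section HeavyPairsOutsideH1.
Variables (V : finType) (H : {set {set V}}) (p : nat) (h : {set V}).
Hypotheses (hH : h \in H) (h_notH1 : h \notin H1 H p).

Lemma heavy_path_pheavy x y z :
  x \in h -> y \in h -> z \in h -> x != y -> y != z -> x != z ->
  heavy 2 H [set x; y] -> heavy 2 H [set y; z] -> heavy p H [set x; z].
Proof.
move=> xh yh zh xy yz xz hxy hyz; apply: contraNT h_notH1 => light_xz.
have inT w : w \in [set x; y; z] = [|| w == x, w == y | w == z] by rewrite !inE orbA.
have xT : x \in [set x; y; z] by rewrite inT eqxx.
have yT : y \in [set x; y; z] by rewrite inT eqxx orbT.
have zT : z \in [set x; y; z] by rewrite inT eqxx !orbT.
rewrite inE hH; apply/existsP; exists [set x; y; z]; apply/and4P; split.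
- by apply/subsetP=> w; rewrite inT => /or3P[]/eqP->.
- by rewrite setUC cardsU1 cards2 xy !inE negb_or ![z == _]eq_sym xz yz.
- have xy_yz : [set x; y] != [set y; z].
    apply: contraNneq xy => E; have : x \in [set y; z] by rewrite -E !inE eqxx.
    by rewrite !inE (negbTE xz) orbF.
  apply: leq_trans (_ : #|[set [set x; y]; [set y; z]]| <= _).
    by rewrite cards2 xy_yz.
  apply/subset_leq_card/subsetP=> e; rewrite in_set2 => /orP[]/eqP->;
    by rewrite inE set2_in_subedges.
- by apply/exists_inP; exists [set x; z]; rewrite ?set2_in_subedges.
Qed.

Hypothesis p_gt1 : 1 < p.

Lemma heavy_trans x y z :
  x \in h -> y \in h -> z \in h -> x != y -> y != z -> x != z ->
  heavy 2 H [set x; y] -> heavy 2 H [set y; z] -> heavy 2 H [set x; z].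
Proof.
move=> xh yh zh xy yz xz hxy hyz.
exact: leq_trans p_gt1 (heavy_path_pheavy xh yh zh xy yz xz hxy hyz).
Qed.

Definition heavy_nbhd (x : V) : {set V} :=
  [set y in h | (y == x) || heavy 2 H [set x; y]].

Definition light_subedges : {set {set V}} :=
  [set e in subedges h | ~~ heavy 2 H e].

Lemma in_light_subedges e :
  (e \in light_subedges) = (e \in subedges h) && ~~ heavy 2 H e.
Proof. by rewrite inE. Qed.

Lemma heavy_nbhd_sub x : heavy_nbhd x \subset h.
Proof. by apply/subsetP=> y; rewrite inE => /andP[]. Qed.

Lemma heavy_nbhd_clique x0 x y : x0 \in h ->
  x \in heavy_nbhd x0 -> y \in heavy_nbhd x0 -> x != y -> heavy 2 H [set x; y].
Proof.
move=> x0h; rewrite !inE => /andP[xh /orP[/eqP->|hx]] /andP[yh /orP[/eqP->|hy]] xy.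
- by rewrite eqxx in xy.
- by [].
- by rewrite setUC.
case: (eqVneq x x0) => [->|xx0] //; case: (eqVneq y x0) => [->|yx0]; first by rewrite setUC.
by apply: (heavy_trans xh x0h yh) => //; rewrite 1?setUC // eq_sym.
Qed.

Lemma heavy_nbhd_pheavy x0 x y : x0 \in h -> 2 < #|heavy_nbhd x0| ->
  x \in heavy_nbhd x0 -> y \in heavy_nbhd x0 -> x != y -> heavy p H [set x; y].
Proof.
move=> x0h big_nbhd xN yN xy.
have [z] : exists z, z \in heavy_nbhd x0 :\: [set x; y].
  apply/card_gt0P; rewrite cardsDS ?cards2 ?xy; first lia.
  by apply/subsetP=> w; rewrite in_set2 => /orP[]/eqP->.
rewrite in_setD in_set2 negb_or => /andP[/andP[zx zy] zN].
have sub := subsetP (heavy_nbhd_sub x0).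
rewrite eq_sym in zx.
apply: (heavy_path_pheavy (sub _ xN) (sub _ zN) (sub _ yN) zx zy xy).
  exact: heavy_nbhd_clique x0h xN zN zx.
exact: heavy_nbhd_clique x0h zN yN zy.
Qed.

Lemma heavy_nbhd_cut_light x0 y z : x0 \in h ->
  y \in heavy_nbhd x0 -> z \in h -> z \notin heavy_nbhd x0 -> ~~ heavy 2 H [set y; z].
Proof.
move=> x0h yN zh zN.
have yz : y != z by apply: contraNneq zN => <-.
have x0z : x0 != z by apply: contraNneq zN => <-; rewrite inE x0h eqxx.
apply: contra zN => hyz; rewrite inE zh /=.
case: (eqVneq y x0) => [<-|yx0]; first by rewrite hyz orbT.
move: yN; rewrite inE (negbTE yx0) /= => /andP[yh hx0y].
by rewrite (heavy_trans x0h yh zh _ yz x0z hx0y hyz) ?orbT // eq_sym.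
Qed.

Lemma card_light_subedges_cut x0 : x0 \in h ->
  #|heavy_nbhd x0| * #|h :\: heavy_nbhd x0| <= #|light_subedges|.
Proof.
move=> x0h; rewrite -cardsX -(@card_in_imset _ _ (fun u : V * V => [set u.1; u.2])).
  apply/subset_leq_card/subsetP=> _ /imsetP[[y z] /setXP[yN /setDP[zh zN]] ->] /=.
  have yz : y != z by apply: contraNneq zN => <-.
  have yh := subsetP (heavy_nbhd_sub x0) y yN.
  by rewrite in_light_subedges set2_in_subedges ?(heavy_nbhd_cut_light x0h yN zh zN).
move=> [y z] [y' z'] /setXP[yN /setDP[_ zN]] /setXP[y'N /setDP[_ z'N]].
exact: set2_inj_cut yN zN y'N z'N.
Qed.

Lemma card_light_subedges_degree a : (forall x, x \in h -> #|heavy_nbhd x| <= a) ->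
  #|h| * (#|h| - a) <= 2 * #|light_subedges|.
Proof.
move=> small_nbhd.
have light_deg x : x \in h -> #|h| - a <= #|[set e in light_subedges | x \in e]|.
  move=> xh; have xN : x \in heavy_nbhd x by rewrite inE xh eqxx.
  apply: leq_trans (_ : #|h :\: heavy_nbhd x| <= _).
    by rewrite cardsDS ?heavy_nbhd_sub // leq_sub2l ?small_nbhd.
  rewrite -(@card_in_imset _ _ (fun y => [set x; y])); last first.
    by move=> y y' /setDP[_ yN] /setDP[_ y'N] /(set2_inj_cut xN yN xN y'N) [].
  apply/subset_leq_card/subsetP=> _ /imsetP[y /setDP[yh yN] ->].
  have xy : x != y by apply: contraNneq yN => <-.
  rewrite inE in_light_subedges set2_in_subedges //= !inE eqxx andbT.
  by move: yN; rewrite inE yh negb_or => /andP[].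
apply: leq_trans (_ : \sum_(x in h) #|[set e in light_subedges | x \in e]| <= _).
  by rewrite -sum_nat_const; apply: leq_sum.
rewrite (double_count _ _ (fun x (e : {set V}) => x \in e)) mulnC -sum_nat_const.
apply: leq_sum => e; rewrite in_light_subedges inE => /andP[/andP[_ /eqP <-] _].
by apply/subset_leq_card/subsetP=> x; rewrite inE => /andP[].
Qed.

End HeavyPairsOutsideH1.

Lemma cut_size_bound (r u a L : nat) :
  2 < r -> 1 < u -> 0 < a -> a < r -> (2 < a -> a < u) ->
  a * (r - a) <= L -> r * (r - a) <= 2 * L ->
  minn r.-1 u.-1 * (r - minn r.-1 u.-1) <= L.
Proof.
move=> r_gt2 u_gt1 a_gt0 a_lt_r a_lt_u cutL degL.
set k := minn r.-1 u.-1.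
have k_gt0 : 0 < k by rewrite /k; lia.
have k_lt_r : k < r by rewrite /k; lia.
have [a_le_k|k_lt_a] := leqP a k.
  have [rk_le_a|a_lt_rk] := leqP (r - k) a.
    apply: leq_trans cutL.
    have -> : a * (r - a) = k * (r - k) + (a - (r - k)) * (k - a) by nia.
    exact: leq_addr.
  have : 2 * (k * (r - k)) <= r * (r - a) by nia.
  lia.
have a_le2 : a <= 2 by apply: contraTT k_lt_a; rewrite -ltnNge => /a_lt_u; rewrite /k; lia.
have -> : k = 1 by rewrite /k in k_lt_a *; lia.
by apply: leq_trans cutL; nia.
Qed.

Lemma light_subedges_H3 (U V : finType) (EF : {set {set U}}) (H : {set {set V}}) r h :
  is_graph EF -> 1 < #|U| -> 2 < r -> (forall h, h \in H -> #|h| = r) ->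
  ~ has_BergeF EF H -> h \in H3 H #|EF| ->
  minn r.-1 #|U|.-1 * (r - minn r.-1 #|U|.-1) <= #|light_subedges H h|.
Proof.
move=> graphF U_gt1 r_gt2 Hr noBerge; set p := #|EF|.
rewrite in_setD in_setU negb_or => /andP[/andP[h_notH1 h_notH2] hH].
have hr := Hr h hH.
have [e eh e_light] : exists2 e, e \in subedges h & ~~ heavy p H e.
  by apply/forall_inPn; move: h_notH2; rewrite inE hH.
have p_gt1 : 1 < p.
  have : 0 < codeg H e.
    by apply/card_gt0P; exists h; case/setIdP: eh => e_sub _; rewrite inE hH.
  by move: e_light; rewrite /heavy -ltnNge; lia.
have [x0 x0h max_x0] : exists2 x0, x0 \in h &
    forall x, x \in h -> #|heavy_nbhd H h x| <= #|heavy_nbhd H h x0|.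
  have h_gt0 : 0 < #|h| by rewrite hr; lia.
  have [x0 x0h E] := eq_bigmax_cond (fun x => #|heavy_nbhd H h x|) h_gt0.
  by exists x0 => // x xh; rewrite -E; apply: leq_bigmax_cond.
set a := #|heavy_nbhd H h x0|.
have a_gt0 : 0 < a by apply/card_gt0P; exists x0; rewrite inE x0h eqxx.
have a_lt_r : a < r.
  rewrite ltn_neqAle -{2}hr subset_leq_card ?heavy_nbhd_sub // andbT.
  apply: contraNneq e_light => a_r.
  have N_h : heavy_nbhd H h x0 = h.
    by apply/eqP; rewrite eqEcard heavy_nbhd_sub /= -/a a_r hr.
  case/setIdP: eh => e_sub /cards2P[u [v [uv e_uv]]].
  have [uh vh] : u \in h /\ v \in h.
    by split; apply: (subsetP e_sub); rewrite e_uv !inE eqxx ?orbT.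
  rewrite e_uv; apply: (heavy_nbhd_pheavy hH h_notH1 p_gt1 x0h); rewrite ?N_h ?hr //.
have a_lt_U : 2 < a -> a < #|U|.
  move=> a_gt2; rewrite ltnNge; apply/negP=> U_le_a; apply: noBerge.
  apply: (bergeF_of_heavy_clique graphF U_le_a) => x y xN yN xy.
  exact: (heavy_nbhd_pheavy hH h_notH1 p_gt1 x0h a_gt2 xN yN xy).
apply: (cut_size_bound r_gt2 U_gt1 a_gt0 a_lt_r a_lt_U).
  have := card_light_subedges_cut hH h_notH1 p_gt1 x0h.
  by rewrite cardsDS ?heavy_nbhd_sub // hr.
by rewrite -hr; apply: card_light_subedges_degree.
Qed.

Section Counting.
Variables (V : finType) (H : {set {set V}}) (p : nat).

Lemma card_le_H123 : #|H| <= #|H1 H p| + #|H2 H p| + #|H3 H p|.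
Proof.
have H_sub : H \subset (H1 H p :|: H2 H p) :|: H3 H p.
  by apply/subsetP=> h hH; rewrite in_setU in_setD hH andbT orbN.
apply: leq_trans (subset_leq_card H_sub) _.
by apply: leq_trans (leq_card_setU _ _) _; rewrite leq_add2r leq_card_setU.
Qed.

Lemma G2_heavy e : e \in G2 H p -> heavy p H e.
Proof.
case/setIdP=> e2 /exists_inP[h /setIdP[_ /forall_inP heavy_h] e_sub].
by apply: heavy_h; rewrite inE e_sub.
Qed.

Lemma card_H2_le r : (forall h, h \in H -> #|h| = r) -> #|H2 H p| <= ncliques r (G2 H p).
Proof.
move=> Hr; apply/subset_leq_card/subsetP=> h hH2.
have /setIdP[hH _] := hH2.
rewrite inE Hr // eqxx /=; apply/subsetP=> e /setIdP[e_sub e2].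
by rewrite inE e2; apply/exists_inP; exists h.
Qed.

Lemma card_H3_le m : (forall h, h \in H3 H p -> m <= #|light_subedges H h|) ->
  #|H3 H p| * m <= #|G3 H p|.
Proof.
move=> many_light; rewrite -sum_nat_const.
apply: (@leq_trans (\sum_(h in H3 H p) #|[set e in G3 H p | e \in light_subedges H h]|)).
  apply: leq_sum => h hH3; apply: leq_trans (many_light h hH3) _.
  apply/subset_leq_card/subsetP=> e e_light; rewrite inE e_light andbT.
  move: e_light; rewrite in_light_subedges => /andP[e_sub e_light].
  by rewrite inE e_light andbT; apply/bigcupP; exists h.
rewrite double_count -sum1_card; apply: leq_sum => e /setIdP[_ e_light].
apply: leq_trans (_ : codeg H e <= 1); last by rewrite leqNgt.
apply/subset_leq_card/subsetP=> h /setIdP[/setDP[hH _]].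
by rewrite in_light_subedges => /andP[/setIdP[e_sub _] _]; rewrite inE hH.
Qed.

Lemma H1_0 : H1 H 0 = set0.
Proof.
apply/setP=> h; rewrite inE in_set0; apply/negbTE/andP=> -[_ /existsP[T]].
by case/and4P=> _ _ _ /exists_inP[e _]; rewrite /heavy leq0n.
Qed.

Lemma G1_0 (Tch : {set V} -> {set V}) : G1 H 0 Tch = set0.
Proof. by rewrite /G1 H1_0 big_set0. Qed.

Variable Tch : {set V} -> {set V}.
Hypothesis goodT : forall h, h \in H1 H p -> good_triangle H p h (Tch h).

Lemma card_H1_le : #|H1 H p| <= (p - 1) * ncliques 3 (G1 H p Tch).
Proof.
set C3 := [set S : {set V} | (#|S| == 3) && (subedges S \subset G1 H p Tch)].
have T_C3 h : h \in H1 H p -> Tch h \in C3.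
  move=> hH1; have /and4P[_ T3 _ _] := goodT hH1.
  by rewrite inE T3; apply: (bigcup_sup h hH1).
have small_fibre S : #|[set h in H1 H p | Tch h == S]| <= p - 1.
  case: (set_0Vmem [set h in H1 H p | Tch h == S]) => [->|[h0]]; first by rewrite cards0.
  case/setIdP=> h0H1 /eqP <-.
  have /and4P[_ _ _ /exists_inP[e /setIdP[e_sub _] e_light]] := goodT h0H1.
  apply: leq_trans (_ : codeg H e <= _); last by move: e_light; rewrite /heavy -ltnNge; lia.
  apply/subset_leq_card/subsetP=> h /setIdP[hH1 /eqP T_h].
  have /and4P[Th _ _ _] := goodT hH1; have /setIdP[hH _] := hH1.
  by rewrite inE hH (subset_trans e_sub) // -T_h.
rewrite /ncliques -/C3 mulnC -sum_nat_const.
apply: (@leq_trans (\sum_(S in C3) #|[set h in H1 H p | Tch h == S]|)); last first.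
  by apply: leq_sum => S _; apply: small_fibre.
rewrite -(double_count _ _ (fun h S => Tch h == S)) -sum1_card; apply: leq_sum => h hH1.
by apply/card_gt0P; exists (Tch h); rewrite inE T_C3 ?eqxx.
Qed.

End Counting.

Lemma G2_copy_free (U V : finType) (EF : {set {set U}}) (H : {set {set V}}) :
  ~ has_BergeF EF H -> ~ contains_copy EF (G2 H #|EF|).
Proof.
move=> noBerge [phi [phi_inj phiG2]]; apply: noBerge.
by apply: (bergeF_of_heavy_embedding phi_inj) => e /phiG2/G2_heavy.
Qed.

Local Open Scope ring_scope.

Theorem proposition6 (U V : finType) (EF : {set {set U}}) (r : nat)
  (H : {set {set V}}) (Tch : {set V} -> {set V}) :
  is_graph EF -> (2 <= #|U|)%N -> (3 <= r)%N ->
  (forall h, h \in H -> #|h| = r) ->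
  ~ has_BergeF EF H ->
  (forall h, h \in H1 H #|EF| -> good_triangle H #|EF| h (Tch h)) ->
  ~ contains_copy EF (G2 H #|EF|) /\
  (let k := minn r.-1 #|U|.-1 in
   (#|H|%:R : rat) <=
     (#|EF|%:R - 1) * (ncliques 3 (G1 H #|EF| Tch))%:R
     + (ncliques r (G2 H #|EF|))%:R
     + (#|G3 H #|EF| |)%:R / (k * (r - k))%:R).
Proof.
move=> graphF U_ge2 r_ge3 Hr noBerge goodT; split; first exact: G2_copy_free.
move=> k; set p := #|EF|.
have k_pos : (0 < k * (r - k))%N by rewrite /k muln_gt0; apply/andP; split; lia.
have bound1 : (#|H1 H p|%:R : rat) <= (p%:R - 1) * (ncliques 3 (G1 H p Tch))%:R.
  have [p0|p_gt0] := posnP p; first by rewrite p0 H1_0 G1_0 ncliques_set0 // cards0 mulr0.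
  by rewrite -(natrB _ p_gt0) -natrM ler_nat card_H1_le.
have bound3 : (#|H3 H p|%:R : rat) <= #|G3 H p|%:R / (k * (r - k))%:R.
  rewrite ler_pdivlMr ?ltr0n // -natrM ler_nat.
  by apply: card_H3_le => h; apply: light_subedges_H3.
apply: le_trans (_ : (#|H1 H p| + #|H2 H p| + #|H3 H p|)%:R <= _).
  by rewrite ler_nat card_le_H123.
by rewrite !natrD lerD // lerD // ler_nat card_H2_le.
Qed.
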